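(* Let $n$ be a positive integer and $p$ an odd prime. Let $S \subseteq \mathbb{Z}_n$ with $0\notin S$, $S=-S$, $|S| = p$, such that the circulant graph $\mathrm{Cay}(\mathbb{Z}_n,S)$ is connected. Then $\mathrm{Cay}(\mathbb{Z}_n,S)$ admits a total perfect code if and only if $p$ divides $n$ and $s \not\equiv s' \pmod p$ for all distinct $s,s'\in S$.
   Context: $\mathbb{Z}_n$ is the additive group of integers modulo $n$; elements are identified with integers in $\{0,1,\dots,n-1\}$ when reducing modulo $p$. For an inverse-closed subset $S$ of $\mathbb{Z}_n$ not containing $0$, the circulant graph $\mathrm{Cay}(\mathbb{Z}_n,S)$ has vertex set $\mathbb{Z}_n$, with $u,v$ adjacent iff $v-u\in S$; its degree is $|S|$. A total perfect code in a graph $\Gamma=(V,E)$ is a subset $C\subseteq V$ such that every vertex of $V$ has exactly one neighbour in $C$. *)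

From mathcomp Require Import all_boot.
Set Implicit Arguments. Unset Strict Implicit. Unset Printing Implicit Defensive.

(* Z_n is modelled by 'I_n (residues 0..n-1) with arithmetic mod n. *)

Definition zsub (n : nat) (v u : 'I_n) : nat := (v + (n - u)) %% n.

Definition zneg (n : nat) (s : 'I_n) : nat := (n - s) %% n.

Definition conn_set (n : nat) (S : {set 'I_n}) : Prop :=
  (forall s, s \in S -> val s != 0) /\
  (forall s, s \in S -> exists2 t, t \in S & val t = zneg s).

Definition cay_adj (n : nat) (S : {set 'I_n}) : rel 'I_n :=
  fun u v => [exists s in S, val s == zsub v u].

Definition cay_connected (n : nat) (S : {set 'I_n}) : Prop :=
  forall u v : 'I_n, connect (cay_adj S) u v.

Definition total_perfect_code (n : nat) (S : {set 'I_n}) (C : {set 'I_n}) : Prop :=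
  forall v : 'I_n, #|[set u in C | cay_adj S v u]| = 1.

(* A total perfect code C makes Z_n the direct sum C + S, so n = |C| p and, writing
   X(w) for the sum of w^x over x in X, C(w) S(w) = 0 at every n-th root of unity
   w <> 1. Let p^k be the exact power of p in n. If S(w) <> 0 at all p^k-th roots
   w <> 1, then C vanishes there and p^k divides |C|, so p^(k+1) divides n: absurd.
   Hence S vanishes at one, so (by Galois conjugation) at every, primitive p^(j+1)-th
   root of unity. Fourier inversion then makes the residue counts of S modulo p^(j+1)
   periodic of period p^j; as |S| = p, S is a single class mod p^j meeting every
   class mod p^(j+1) at most once. For j = 0 this is the claim; for j > 0 all of S
   would be congruent mod p, hence divisible by p since S = -S and p is odd, and
   Cay(Z_n, S) would be disconnected. Conversely, when S is a transversal of the
   residues mod p, the multiples of p form a total perfect code. *)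

From mathcomp Require Import all_boot all_algebra.
From mathcomp Require Import algC cyclotomic zify.
Set Implicit Arguments. Unset Strict Implicit. Unset Printing Implicit Defensive.
Import GRing.Theory Num.Theory.
Local Open Scope ring_scope.

Definition genf n (X : {set 'I_n}) (w : algC) : algC := \sum_(x in X) w ^+ x.

Definition rescount n (X : {set 'I_n}) (N y : nat) : nat :=
  #|[set x in X | (val x %% N == y)%N]|.

Lemma sum_unity_root_eq0 (N : nat) (w : algC) :
  w ^+ N = 1 -> w != 1 -> \sum_(i < N) w ^+ i = 0.
Proof.
move=> wN w1; have := subrX1 w N; rewrite wN subrr => /esym/eqP.
by rewrite mulf_eq0 subr_eq0 (negbTE w1) => /eqP.
Qed.

Lemma sum_prim_root_exprM (N m : nat) (z : algC) : N.-primitive_root z ->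
  \sum_(i < N) z ^+ (i * m) = if (N %| m)%N then N%:R else 0.
Proof.
move=> pz; under eq_bigr => i _ do rewrite mulnC exprM.
case: ifPn => [Nm | Nm].
  have -> : z ^+ m = 1 by apply/eqP; rewrite -(prim_order_dvd pz).
  by under eq_bigr => i _ do rewrite expr1n; rewrite sumr_const card_ord.
apply: sum_unity_root_eq0; first by rewrite exprAC (prim_expr_order pz) expr1n.
by rewrite -(prim_order_dvd pz).
Qed.

Lemma dvdn_add_subn (N x y : nat) : (y < N)%N -> (N %| x + (N - y))%N = (x %% N == y)%N.
Proof.
move=> yN; have yxN : (y <= x + N)%N by apply: leq_trans (ltnW yN) (leq_addl x N).
by rewrite addnBA ?(ltnW yN) // -eqn_mod_dvd // modnDr (modn_small yN).
Qed.

Lemma sum_modn (g : nat -> nat) (q M : nat) :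
  (\sum_(0 <= y < q * M) g (y %% M) = q * \sum_(r < M) g r)%N.
Proof.
rewrite -(big_mkord xpredT g).
elim: q => [|q IH]; first by rewrite mul0n big_geq.
rewrite mulSn (big_cat_nat (n := q * M)) ?leq_addl //= IH addnC; congr (_ + _)%N.
rewrite -{1}[(q * M)%N]add0n big_addn addnK; apply: eq_big_nat => i /andP[_ iM].
by rewrite addnC modnMDl modn_small.
Qed.

Lemma pfactor_unity_root_prim (p k : nat) (w : algC) : prime p ->
  w ^+ (p ^ k) = 1 -> w != 1 -> exists j, (p ^ j.+1).-primitive_root w.
Proof.
move=> pp wpk w1; have pk_gt0 : (0 < p ^ k)%N by rewrite expn_gt0 prime_gt0.
have [m pm] := prim_order_exists pk_gt0 wpk.
case/dvdn_pfactor => // -[|j] _ em; last by exists j; rewrite -em.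
by move: pm; rewrite em expn0 => /prim_expr_order; rewrite expr1 => /eqP; rewrite (negPf w1).
Qed.

Section GeneratingFunction.

Variable n : nat.
Implicit Types X : {set 'I_n}.

Lemma genf1 X : genf X 1 = #|X|%:R.
Proof. by rewrite /genf; under eq_bigr do rewrite expr1n; rewrite sumr_const. Qed.

Lemma genf_eq0_prim_root X (N : nat) (w w' : algC) :
  N.-primitive_root w -> N.-primitive_root w' -> genf X w = 0 -> genf X w' = 0.
Proof.
move=> pw pw'; pose P : {poly rat} := \sum_(x in X) 'X^x.
have genfE z : genf X z = (map_poly ratr P).[z].
  rewrite rmorph_sum horner_sum; apply: eq_bigr => x _.
  by rewrite rmorphXn /= map_polyX hornerXn.
have [q [Dq _] rootq] := minCpolyP w; have [q' [Dq' _] rootq'] := minCpolyP w'.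
have qq' : q = q'.
  apply: (map_poly_inj (ratr : {rmorphism rat -> algC})); rewrite -Dq -Dq'.
  by rewrite (minCpoly_cyclotomic pw) (minCpoly_cyclotomic pw')
     -(Cintr_Cyclotomic pw) -(Cintr_Cyclotomic pw').
by rewrite !genfE => /rootP; rewrite rootq qq' -rootq' => /rootP.
Qed.

Lemma genf_inversion X (N y : nat) (z : algC) : N.-primitive_root z -> (y < N)%N ->
  \sum_(i < N) genf X (z ^+ i) * z ^+ (i * (N - y)) = (rescount X N y * N)%:R.
Proof.
move=> pz yN; rewrite /rescount; under eq_bigr => i _ do rewrite mulr_suml.
rewrite exchange_big /=.
under eq_bigr => x _ do
  (under eq_bigr => i _ do rewrite -exprM -exprD -mulnDr;
   rewrite sum_prim_root_exprM // dvdn_add_subn //).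
rewrite -big_mkcondr /= sumr_const natrM mulr_natl -cardsE.
by congr (_ *+ _); apply: eq_card => x; rewrite !inE.
Qed.

Lemma sum_rescount X (N : nat) : (0 < N)%N -> (\sum_(y < N) rescount X N y = #|X|)%N.
Proof.
move=> N0; under eq_bigr => y _ do rewrite /rescount -sum1_card big_mkcond /=.
rewrite exchange_big /= -sum1_card [RHS]big_mkcond /=; apply: eq_bigr => x _.
under eq_bigr => y _ do rewrite inE.
case: (x \in X) => /=; last by rewrite big1.
rewrite (bigD1 (Ordinal (ltn_pmod x N0))) //= eqxx big1 ?addn0 //.
by move=> y ne; case: eqP => // xy; case/eqP: ne; apply: val_inj.
Qed.

Lemma dvdn_card_genf_eq0 X (N : nat) (z : algC) : N.-primitive_root z ->
  (forall i : 'I_N, (0 < i)%N -> genf X (z ^+ i) = 0) -> (N %| #|X|)%N.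
Proof.
move=> pz genf0; have N0 := prim_order_gt0 pz.
have := genf_inversion X pz N0; rewrite (bigD1 (Ordinal N0)) //= big1 => [|i i0].
  by rewrite addr0 mulr1 genf1 => /eqP; rewrite eqr_nat => /eqP ->; apply: dvdn_mull.
by rewrite genf0 ?mul0r // lt0n; apply: contraNneq i0 => i_0; apply/eqP/val_inj.
Qed.

End GeneratingFunction.

Section PrimePowerVanishing.

Variables (n p j : nat) (X : {set 'I_n}).
Hypothesis p_prime : prime p.
Hypothesis genf_X0 : forall w : algC, (p ^ j.+1).-primitive_root w -> genf X w = 0.
Local Notation N := (p ^ j.+1)%N.
Local Notation M := (p ^ j)%N.

Let N_gt0 : (0 < N)%N. Proof. by rewrite expn_gt0 prime_gt0. Qed.
Let M_gt0 : (0 < M)%N. Proof. by rewrite expn_gt0 prime_gt0. Qed.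
Let NM : N = (p * M)%N. Proof. by rewrite expnS. Qed.
Let M_dvd_N : (M %| N)%N. Proof. by rewrite NM dvdn_mull. Qed.

Lemma rescount_periodic y : (y + M < N)%N -> rescount X N (y + M) = rescount X N y.
Proof.
move=> yMN; have yN : (y < N)%N by apply: leq_ltn_trans yMN; apply: leq_addr.
have [z pz] := C_prim_root_exists N_gt0.
apply/eqP; rewrite -(eqn_pmul2r N_gt0) -(eqr_nat algC).
rewrite -(genf_inversion X pz yN) -(genf_inversion X pz yMN); apply/eqP.
apply: eq_bigr => i _; move: (nat_of_ord i) => {}i.
have [cop | ncop] := boolP (coprime i p).
  by rewrite genf_X0 ?mul0r // prim_root_exp_coprime // coprime_pexpr.
(* for p | i, z ^+ i is a p^j-th root of unity, blind to a shift of y by M *)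
have zM : z ^+ (i * M) = 1.
  apply/eqP; rewrite -(prim_order_dvd pz) NM dvdn_pmul2r ?expn_gt0 ?prime_gt0 //.
  by rewrite -[(p %| i)%N]negbK -prime_coprime // coprime_sym.
have -> : (N - y = N - (y + M) + M)%N by lia.
by congr (_ * _); rewrite mulnDr exprD zM mulr1.
Qed.

Lemma rescount_modE y : (y < N)%N -> rescount X N y = rescount X N (y %% M).
Proof.
have shift q r : (r < M)%N -> (q < p)%N -> rescount X N (r + q * M) = rescount X N r.
  move=> rM; elim: q => [|q IH] qp; first by rewrite mul0n addn0.
  rewrite mulSn addnCA addnC rescount_periodic ?IH ?(ltnW qp) // NM.
  apply: (@leq_trans (q.+2 * M)); last by rewrite leq_mul2r qp orbT.
  by rewrite !mulSn addnAC addnA !ltn_add2r.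
move=> yN; rewrite {1}(divn_eq y M) addnC shift ?ltn_pmod //.
by rewrite ltn_divLR // -NM.
Qed.

Lemma card_rescount_mod : #|X| = (p * \sum_(r < M) rescount X N r)%N.
Proof.
rewrite -(sum_rescount X N_gt0).
under eq_bigr => y _ do rewrite rescount_modE //.
by rewrite -(big_mkord xpredT (fun y => rescount X N (y %% M))) {1}NM sum_modn.
Qed.

Lemma rescount_mod_gt0 x : x \in X -> (0 < rescount X N (x %% M))%N.
Proof.
move=> xX; rewrite -(modn_dvdm x M_dvd_N) -rescount_modE ?ltn_pmod // card_gt0.
by apply/set0Pn; exists x; rewrite inE xX eqxx.
Qed.

Hypothesis card_X : #|X| = p.

Let sum_rescount_mod : (\sum_(r < M) rescount X N r = 1)%N.
Proof.
by apply/eqP; rewrite -(eqn_pmul2l (prime_gt0 p_prime)) muln1 -card_rescount_mod card_X.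
Qed.

Lemma genf_eq0_modn_eq : {in X &, forall x x' : 'I_n, x %% M = x' %% M}%N.
Proof.
move=> x x' xX x'X; apply/eqP; apply: contraT => neq.
have := sum_rescount_mod.
rewrite (bigD1 (Ordinal (ltn_pmod x M_gt0))) //=.
rewrite (bigD1 (Ordinal (ltn_pmod x' M_gt0))) /=; last first.
  by apply: contra neq => /eqP[->].
have := rescount_mod_gt0 xX; have := rescount_mod_gt0 x'X; lia.
Qed.

Lemma genf_eq0_modn_inj : {in X &, injective (fun x : 'I_n => val x %% N)%N}.
Proof.
move=> x x' xX x'X xx'.
have : (rescount X N (x %% N) <= 1)%N.
  rewrite rescount_modE ?ltn_pmod // modn_dvdm // -sum_rescount_mod.
  by rewrite (bigD1 (Ordinal (ltn_pmod x M_gt0))) //=; apply: leq_addr.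
by move/card_le1_eqP; apply; rewrite inE ?xX ?x'X /= ?xx' eqxx.
Qed.

End PrimePowerVanishing.

Section CirculantZn.

Variable n' : nat.
Local Notation n := n'.+1.
Implicit Types (S C : {set 'I_n}) (u v : 'I_n).

Lemma val_subE u v : val (u - v) = zsub u v.
Proof. by rewrite /= /zsub modnDmr. Qed.

Lemma cay_adjE S u v : cay_adj S u v = (v - u \in S).
Proof.
apply/existsP/idP => [[s /andP[sS /eqP e]] | h].
  by have -> : v - u = s by apply: val_inj; rewrite val_subE e.
by exists (v - u); rewrite h val_subE eqxx.
Qed.

Lemma conn_setN S s : conn_set S -> s \in S -> - s \in S.
Proof.
case=> _ symS sS; have [t tS e] := symS s sS.
by have <- : t = - s by apply: val_inj; rewrite e.
Qed.

Lemma conn_set_subC S u v : conn_set S -> (u - v \in S) = (v - u \in S).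
Proof. by move=> cS; apply/idP/idP => h; rewrite -opprB conn_setN. Qed.

Lemma modn_valD m u v : (m %| n)%N -> (val (u + v)%R %% m = (u + v) %% m)%N.
Proof. by move=> mn; rewrite /= modn_dvdm. Qed.

Lemma modn_valB m u v : (m %| n)%N -> ((val (u - v)%R + v) %% m = u %% m)%N.
Proof. by move=> mn; rewrite -modn_valD // subrK. Qed.

Lemma genf_tpc S C (w : algC) : conn_set S -> total_perfect_code S C ->
  w ^+ n = 1 -> \sum_(v : 'I_n) w ^+ v = genf C w * genf S w.
Proof.
move=> cS tpc wn.
transitivity (\sum_(v : 'I_n) \sum_(u in C) (if v - u \in S then w ^+ v else 0)).
  apply: eq_bigr => v _; rewrite -big_mkcondr /=.
  under eq_bigl => u do rewrite -conn_set_subC // -cay_adjE.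
  by rewrite sumr_const -cardsE tpc.
rewrite exchange_big /= /genf mulr_suml; apply: eq_bigr => u _.
rewrite -big_mkcond /= (reindex_inj (addrI u)) /= mulr_sumr.
apply: eq_big => [s | s _]; first by rewrite addrC addKr.
by rewrite expr_mod // exprD.
Qed.

Lemma tpc_card S C : conn_set S -> total_perfect_code S C -> n = (#|C| * #|S|)%N.
Proof.
move=> cS tpc; have := genf_tpc cS tpc (expr1n _ n).
under eq_bigr do rewrite expr1n.
by rewrite sumr_const card_ord !genf1 -natrM => /eqP; rewrite eqr_nat => /eqP.
Qed.

Lemma tpc_genf_eq0 S C (w : algC) : conn_set S -> total_perfect_code S C ->
  w ^+ n = 1 -> w != 1 -> genf C w * genf S w = 0.
Proof.
move=> cS tpc wn w1; rewrite -genf_tpc //.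
exact: sum_unity_root_eq0.
Qed.

Lemma tpc_multiples (m : nat) S : (0 < m)%N -> (m %| n)%N -> #|S| = m ->
  {in S &, injective (fun s : 'I_n => val s %% m)%N} ->
  total_perfect_code S [set u : 'I_n | (m %| val u)%N].
Proof.
move=> m0 mn Sm injS v.
pose res (s : 'I_n) : 'I_m := Ordinal (ltn_pmod (val s) m0).
have res_onto : res @: S = setT.
  apply/eqP; rewrite eqEcard subsetT cardsT card_ord card_in_imset ?Sm ?leqnn //.
  by move=> s s' sS s'S /(congr1 val); apply: injS.
pose t : 'I_m := Ordinal (ltn_pmod (m - v %% m) m0).
have /imsetP[s sS /(congr1 val) /= ts] : t \in res @: S by rewrite res_onto inE.
have vs0 : ((val s + v) %% m = 0)%N.
  rewrite -modnDml -ts modnDml -modnDmr subnK ?modnn //.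
  exact: ltnW (ltn_pmod _ m0).
suff -> : [set u in [set u : 'I_n | (m %| val u)%N] | cay_adj S v u] = [set v + s].
  by rewrite cards1.
apply/setP => u; rewrite !inE cay_adjE.
apply/andP/eqP => [[mu uvS] | ->]; last first.
  have -> : v + s - v = s by rewrite addrC addKr.
  by split; rewrite // /dvdn modn_valD // addnC vs0.
have : (val (u - v)%R %% m = val s %% m)%N.
  by apply/eqP; rewrite -(eqn_modDr v) modn_valB // vs0 -/(dvdn m u).
by move/injS => /(_ uvS sS) <-; rewrite addrC subrK.
Qed.

Lemma connect_modn (m : nat) S u v : (m %| n)%N -> {in S, forall s, m %| val s}%N ->
  connect (cay_adj S) u v -> (val u %% m = val v %% m)%N.
Proof.
move=> mn mS /connectP [q]; elim: q u => [|x q IH] u /=; first by move=> _ ->.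
case/andP; rewrite cay_adjE => /mS /eqP xu0 pth vq; rewrite -(IH x pth vq).
by rewrite -(modn_valB x u mn) -modnDml xu0.
Qed.

Lemma tpc_genf_eq0_prim (p : nat) S C : prime p -> conn_set S -> #|S| = p ->
  total_perfect_code S C ->
  exists j, forall w : algC, (p ^ j.+1).-primitive_root w -> genf S w = 0.
Proof.
move=> pp cS card_S tpc; have n_eq := tpc_card cS tpc; rewrite card_S in n_eq.
set k := logn p n; have pk_gt0 : (0 < p ^ k)%N by rewrite expn_gt0 prime_gt0.
have [z pz] := C_prim_root_exists pk_gt0.
have zi1 (i : 'I_(p ^ k)) : (0 < i)%N -> z ^+ i != 1.
  by move=> i_gt0; rewrite -(expr0 z) (eq_prim_root_expr pz) mod0n modn_small // -lt0n.
have zipk (i : nat) : (z ^+ i) ^+ (p ^ k) = 1.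
  by rewrite exprAC (prim_expr_order pz) expr1n.
have [/existsP[i /andP[i_gt0 /eqP Si0]] | /existsPn nS] :=
  boolP [exists i : 'I_(p ^ k), (0 < i)%N && (genf S (z ^+ i) == 0)].
  have [j pzi] := pfactor_unity_root_prim pp (zipk i) (zi1 i i_gt0).
  by exists j => w pw; apply: genf_eq0_prim_root pzi pw Si0.
suff : (p ^ k.+1 %| n)%N by rewrite pfactor_dvdn // ltnn.
rewrite n_eq expnSr dvdn_pmul2r ?prime_gt0 //.
apply: (dvdn_card_genf_eq0 pz) => i i_gt0; apply/eqP.
have : genf C (z ^+ i) * genf S (z ^+ i) = 0.
  apply: tpc_genf_eq0 (zi1 i i_gt0) => //.
  by rewrite -(divnK (pfactor_dvdnn p n)) mulnC exprM zipk expr1n.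
by move/eqP; rewrite mulf_eq0 => /orP[// | Si0]; have := nS i; rewrite i_gt0 Si0.
Qed.

Lemma conn_set_dvdn (p : nat) S : prime p -> odd p -> (p %| n)%N -> conn_set S ->
  {in S &, forall s s' : 'I_n, s %% p = s' %% p}%N -> {in S, forall s, p %| val s}%N.
Proof.
move=> pp op pn cS eqS s sS.
have sN : (val (- s) %% p = val s %% p)%N := eqS _ _ (conn_setN cS sS) sS.
have := modn_valB 0 s pn; rewrite sub0r mod0n -modnDml sN modnDml addnn -mul2n => p2s.
by rewrite -(Gauss_dvdr _ (_ : coprime p 2)) ?coprimen2 // /dvdn p2s.
Qed.

Lemma cay_connected_ndvdn (m : nat) S : (1 < m)%N -> (m %| n)%N -> cay_connected S ->
  ~ {in S, forall s, m %| val s}%N.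
Proof.
move=> m_gt1 mn conS mS; have n_gt1 := leq_trans m_gt1 (dvdn_leq (ltn0Sn _) mn).
by have := connect_modn mn mS (conS ord0 (Ordinal n_gt1)); rewrite /= mod0n modn_small.
Qed.

Lemma tpc_modn_inj (p : nat) S C : prime p -> odd p -> conn_set S -> #|S| = p ->
  cay_connected S -> total_perfect_code S C ->
  {in S &, injective (fun s : 'I_n => val s %% p)%N}.
Proof.
move=> pp op cS card_S conS tpc.
have pn : (p %| n)%N by rewrite (tpc_card cS tpc) card_S dvdn_mull.
have [[|j] S0] := tpc_genf_eq0_prim pp cS card_S tpc.
  by have := genf_eq0_modn_inj pp S0 card_S; rewrite expn1.
(* all of S lies in one class mod p; as S = -S and p is odd, that class is 0 *)
exfalso; apply: (cay_connected_ndvdn (prime_gt1 pp) pn conS).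
apply: conn_set_dvdn => // s s' sS s'S.
have pM : (p %| p ^ j.+1)%N by rewrite dvdn_exp.
by rewrite -(modn_dvdm s pM) -(modn_dvdm s' pM) (genf_eq0_modn_eq pp S0 card_S sS s'S).
Qed.

End CirculantZn.

Local Close Scope ring_scope.

Theorem theorem1p3 (n p : nat) (S : {set 'I_n}) :
  0 < n -> prime p -> odd p ->
  conn_set S -> #|S| = p -> cay_connected S ->
  (exists C : {set 'I_n}, total_perfect_code S C) <->
  (p %| n /\ forall s s' : 'I_n, s \in S -> s' \in S -> s != s' ->
                 val s %% p != val s' %% p).
Proof.
case: n S => [S n0 | n' S _ pp op cS card_S conS]; first by rewrite ltnn in n0.
split => [[C tpc] | [pn distinct]].
  split; first by rewrite (tpc_card cS tpc) card_S dvdn_mull.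
  move=> s s' sS s'S; apply: contra_neq.
  exact: tpc_modn_inj pp op cS card_S conS tpc _ _ sS s'S.
exists [set u : 'I_n'.+1 | p %| val u].
apply: tpc_multiples (prime_gt0 pp) pn card_S _ => s s' sS s'S.
exact: contra_eq (distinct s s' sS s'S).
Qed.
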